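(* Let $(R,\mathfrak{m})$ be a Noetherian local ring, let $\varphi$ be a self-map of finite length of $R$, and let $\mathfrak{a}_1,\ldots,\mathfrak{a}_s$ be (not necessarily distinct) ideals of $R$ with $\varphi(\mathfrak{a}_i)R\subseteq\mathfrak{a}_i$ for all $i$. Let $\overline\varphi$ be the self-map induced by $\varphi$ on $R/\prod_i\mathfrak{a}_i$ and $\overline\varphi_i$ the self-map induced on $R/\mathfrak{a}_i$. Then $$h_{\mathrm{alg}}\Big(\overline\varphi,R/\textstyle\prod_i\mathfrak{a}_i\Big)=\max\{h_{\mathrm{alg}}(\overline\varphi_i,R/\mathfrak{a}_i)\mid 1\le i\le s\}.$$
   Context: A self-map of finite length of a Noetherian local ring $(A,\mathfrak{n})$ is a ring endomorphism $\psi$ with $\psi(\mathfrak{n})\subseteq\mathfrak{n}$ and $\psi(\mathfrak{n})A$ $\mathfrak{n}$-primary. If $\mathfrak{a}$ is an ideal with $\varphi(\mathfrak{a})R\subseteq\mathfrak{a}$, then $\varphi$ induces a self-map of finite length of $R/\mathfrak{a}$. Put $\lambda(\psi^n):=\ell_A(A/\psi^n(\mathfrak{n})A)$; the algebraic entropy is $h_{\mathrm{alg}}(\psi,A):=\lim_{n\to\infty}\frac1n\log\lambda(\psi^n)$ (the limit exists). *)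

From Stdlib Require Import Reals ClassicalEpsilon.
From HB Require Import structures.
From mathcomp Require Import all_boot all_order all_algebra.

Set Implicit Arguments.
Unset Strict Implicit.
Unset Printing Implicit Defensive.

Import GRing.Theory.

Section Ideals.
Variable A : comNzRingType.

Definition is_ideal (I : A -> Prop) : Prop :=
  I 0%R /\ (forall x y, I x -> I y -> I (x + y)%R) /\
  (forall r x, I x -> I (r * x)%R).

Definition subset_pr (I J : A -> Prop) : Prop := forall x, I x -> J x.

Definition eq_pr (I J : A -> Prop) : Prop := forall x, I x <-> J x.

Definition ssubset_pr (I J : A -> Prop) : Prop :=
  subset_pr I J /\ exists x, J x /\ ~ I x.

Definition ideal_gen (S : A -> Prop) : A -> Prop :=
  fun x => forall I, is_ideal I -> subset_pr S I -> I x.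

Definition noetherian : Prop :=
  forall c : nat -> (A -> Prop), (forall k, is_ideal (c k)) ->
    (forall k, subset_pr (c k) (c k.+1)) ->
    exists N, forall k, (N <= k)%N -> subset_pr (c k) (c N).

Definition local_ring (m : A -> Prop) : Prop :=
  is_ideal m /\ ~ m 1%R /\ (forall x, ~ m x -> exists y, (x * y)%R = 1%R).

Definition primary_to (m I : A -> Prop) : Prop :=
  subset_pr I m /\ forall x, m x -> exists k, I (x ^+ k)%R.

Definition image_pr (B : Type) (f : A -> B) (S : A -> Prop) : B -> Prop :=
  fun y => exists x, S x /\ y = f x.

(* A strictly increasing chain of ideals I = c 0 ⊊ c 1 ⊊ ... ⊊ c n = A;
   chains of A-submodules of A/I correspond to such chains. *)
Definition ideal_chain (I : A -> Prop) (n : nat) : Prop :=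
  exists c : nat -> (A -> Prop),
    (forall k, is_ideal (c k)) /\ eq_pr (c 0%N) I /\ eq_pr (c n) (fun _ => True) /\
    (forall k, (k < n)%N -> ssubset_pr (c k) (c k.+1)).

(* ell_A(A/I) = n : the supremum of lengths of chains of submodules of A/I is n *)
Definition colength_is (I : A -> Prop) (n : nat) : Prop :=
  ideal_chain I n /\ forall k, ideal_chain I k -> (k <= n)%N.

(* ell_A(A/I) (meaningful when finite) *)
Definition colength (I : A -> Prop) : nat :=
  epsilon (inhabits 0%N) (fun n => colength_is I n).

Definition finite_length_selfmap (m : A -> Prop) (psi : {rmorphism A -> A}) : Prop :=
  subset_pr (image_pr psi m) m /\ primary_to m (ideal_gen (image_pr psi m)).

Definition lambda_it (m : A -> Prop) (psi : {rmorphism A -> A}) (k : nat) : nat :=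
  colength (ideal_gen (image_pr (iter k psi) m)).

Definition alg_entropy (m : A -> Prop) (psi : {rmorphism A -> A}) : R :=
  epsilon (inhabits R0)
    (fun l => Un_cv (fun k => Rdiv (ln (INR (lambda_it m psi k))) (INR k)) l).

Definition prod_ideal (s : nat) (a : 'I_s -> A -> Prop) : A -> Prop :=
  ideal_gen (fun y => exists x : 'I_s -> A, (forall i, a i (x i)) /\
                                             y = (\prod_(i < s) x i)%R).

End Ideals.

Definition quotient_map (A B : comNzRingType) (pi : {rmorphism A -> B})
  (I : A -> Prop) : Prop :=
  (forall y, exists x, pi x = y) /\ (forall x, pi x = 0%R <-> I x).

From Stdlib Require Import Reals ClassicalEpsilon.
From Stdlib Require Import Lra Lia List Classical.

(* For an ideal b of A write lambda_b(n) for the colength of phi^n(m)A + b in A;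
   if psi is the self-map induced on Q = A/b, then lambda_Q(psi^n) = lambda_b(n).
   The proof has three parts.

   By Fekete's lemma, log lambda_b(n) / n converges because
      lambda_b is submultiplicative and >= 1; and if u <= C v_i for some i at each
      n while v_i <= u, the growth rate of u is the largest growth rate of the v_i.

   The key
      estimate l(A/(f(I)A + b)) <= l(A/I) l(A/(f(m)A + b)) follows by refining A/I
      into simple steps; with f = phi^n it gives the submultiplicativity of lambda_b.

   Since P = a_1...a_s <= a_i, lambda_(a_i) <= lambda_P; conversely,
      filtering A/P by the partial products, whose numbers of generators are
      bounded by some H, gives lambda_P(n) <= s H max_i lambda_(a_i)(n). *)

Section RealAnalysis.
Local Open Scope R_scope.

Lemma Rdiv_le_0_compat (a b : R) : 0 <= a -> 0 < b -> 0 <= a / b.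
Proof.
  intros Ha Hb; unfold Rdiv; apply Rmult_le_pos; [exact Ha|].
  left; apply Rinv_0_lt_compat; exact Hb.
Qed.

Lemma ln_le (x y : R) : 0 < x -> x <= y -> ln x <= ln y.
Proof. intros Hx [Hlt|Heq]; [left; apply ln_increasing; auto | subst; lra]. Qed.

Lemma const_div_eventually_small (c eps : R) : 0 < eps ->
  exists N, forall n, (N <= n)%nat -> c / INR n < eps.
Proof.
  intros Heps.
  pose proof (Rabs_pos c) as Hc0; pose proof (Rle_abs c) as Hc.
  destruct (archimed_cor1 (eps / (Rabs c + 1))) as [N [HN HN0]].
  { apply Rdiv_lt_0_compat; lra. }
  exists N; intros n Hn.
  assert (HNpos : 0 < INR N) by (apply lt_0_INR; lia).
  assert (HNn : INR N <= INR n) by (apply le_INR; lia).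
  assert (Hbound : c / INR n <= (Rabs c + 1) * / INR N).
  { unfold Rdiv; apply Rle_trans with ((Rabs c + 1) * / INR n).
    - apply Rmult_le_compat_r; [left; apply Rinv_0_lt_compat|]; lra.
    - apply Rmult_le_compat_l; [lra | apply Rinv_le_contravar; lra]. }
  assert (Hsmall : (Rabs c + 1) * / INR N < (Rabs c + 1) * (eps / (Rabs c + 1))).
  { apply Rmult_lt_compat_l; lra. }
  replace ((Rabs c + 1) * (eps / (Rabs c + 1))) with eps in Hsmall by (field; lra).
  lra.
Qed.

Lemma subadditive_iterate (u : nat -> R) :
  (forall n k, u (n + k)%nat <= u n + u k) ->
  forall m q r, u (q * m + r)%nat <= INR q * u m + u r.
Proof.
  intros Hsub m q r; induction q as [|q IH]; [simpl; lra|].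
  replace (S q * m + r)%nat with (m + (q * m + r))%nat by lia.
  rewrite S_INR; specialize (Hsub m (q * m + r)%nat); lra.
Qed.

Lemma prefix_bounded (u : nat -> R) (m : nat) :
  exists K, 0 <= K /\ forall r, (r < m)%nat -> u r <= K.
Proof.
  induction m as [|m [K [HK0 HK]]].
  - exists 0; split; [lra | intros; lia].
  - exists (Rmax K (u m)); split.
    + apply Rle_trans with K; [exact HK0 | apply Rmax_l].
    + intros r Hr; destruct (Nat.eq_dec r m) as [->|Hne]; [apply Rmax_r|].
      apply Rle_trans with K; [apply HK; lia | apply Rmax_l].
Qed.

(* The key estimate of Fekete's lemma: writing n = q m + r with r < m,
   u(n)/n <= u(m)/m + K/n where K bounds u on [0, m). *)
Lemma subadditive_ratio_bound (u : nat -> R) (m n : nat) (K : R) :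
  (forall n k, u (n + k)%nat <= u n + u k) -> 0 <= u m ->
  (1 <= m)%nat -> (1 <= n)%nat -> (forall r, (r < m)%nat -> u r <= K) ->
  u n / INR n <= u m / INR m + K / INR n.
Proof.
  intros Hsub Hum0 Hm Hn HK.
  assert (Hnpos : 0 < INR n) by (apply lt_0_INR; lia).
  assert (Hmpos : 0 < INR m) by (apply lt_0_INR; lia).
  pose proof (Nat.div_mod_eq n m) as Hdm.
  pose proof (Nat.mod_upper_bound n m ltac:(lia)) as Hr.
  set (q := (n / m)%nat) in *; set (r := (n mod m)%nat) in *.
  assert (Hun : u n <= INR q * u m + K).
  { rewrite Hdm; replace (m * q + r)%nat with (q * m + r)%nat by lia.
    pose proof (subadditive_iterate u Hsub m q r); pose proof (HK r Hr); lra. }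
  assert (Hqm : INR q * INR m <= INR n).
  { rewrite <- mult_INR; apply le_INR; lia. }
  assert (Hratio : 0 <= u m / INR m) by (apply Rdiv_le_0_compat; auto).
  assert (Hqu : INR q * u m <= INR n * (u m / INR m)).
  { replace (INR q * u m) with (INR q * INR m * (u m / INR m)) by (field; lra).
    apply Rmult_le_compat_r; auto. }
  apply Rmult_le_reg_r with (INR n); [exact Hnpos|].
  replace (u n / INR n * INR n) with (u n) by (field; lra).
  replace ((u m / INR m + K / INR n) * INR n) with (INR n * (u m / INR m) + K)
    by (field; lra).
  lra.
Qed.

(* Fekete's lemma: for a nonnegative subadditive sequence u, u(n)/n converges
   (to the infimum of the u(n)/n, n >= 1). *)
Lemma fekete (u : nat -> R) :
  (forall n, 0 <= u n) -> (forall n k, u (n + k)%nat <= u n + u k) ->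
  exists l, Un_cv (fun n => u n / INR n) l.
Proof.
  intros Hpos Hsub.
  (* E is the set of the -u(n)/n; minus its supremum is the infimum of u(n)/n. *)
  set (E := fun x => exists n, (1 <= n)%nat /\ x = - (u n / INR n)).
  assert (HEb : bound E).
  { exists 0; intros x [n [Hn ->]].
    assert (0 <= u n / INR n) by (apply Rdiv_le_0_compat; [|apply lt_0_INR; lia]; auto).
    lra. }
  assert (HEne : exists x, E x) by (exists (- (u 1%nat / INR 1)), 1%nat; split; auto).
  destruct (completeness E HEb HEne) as [M [HMub HMleast]].
  exists (- M); intros eps Heps.
  assert (Hinf : forall n, (1 <= n)%nat -> - M <= u n / INR n).
  { intros n Hn; enough (- (u n / INR n) <= M) by lra.
    apply HMub; exists n; auto. }
  assert (Hclose : exists m, (1 <= m)%nat /\ u m / INR m < - M + eps / 2).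
  { apply NNPP; intros Hno.
    enough (M <= M - eps / 2) by lra.
    apply HMleast; intros x [n [Hn ->]].
    destruct (Rlt_or_le (u n / INR n) (- M + eps / 2)) as [Hlt|Hge]; [|lra].
    exfalso; apply Hno; exists n; auto. }
  destruct Hclose as [m [Hm Hum]].
  destruct (prefix_bounded u m) as [K [HK0 HK]].
  destruct (const_div_eventually_small K (eps / 2)) as [N HN]; [lra|].
  exists (Nat.max 1 N); intros n Hn.
  pose proof (subadditive_ratio_bound u m n K Hsub (Hpos m) Hm ltac:(lia) HK).
  pose proof (HN n ltac:(lia)); pose proof (Hinf n ltac:(lia)).
  unfold Rdist; rewrite Rabs_right; lra.
Qed.

Lemma Un_cv_le_eventually (f g : nat -> R) (lf lg : R) (N : nat) :
  (forall n, (N <= n)%nat -> f n <= g n) -> Un_cv f lf -> Un_cv g lg -> lf <= lg.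
Proof.
  intros Hle Hf Hg.
  apply (Rle_cv_lim (Un := fun n => f (n + N)%nat) (Vn := fun n => g (n + N)%nat)).
  - intro n; apply Hle; lia.
  - intros e He; destruct (Hf e He) as [M HM]; exists M; intros n Hn; apply HM; lia.
  - intros e He; destruct (Hg e He) as [M HM]; exists M; intros n Hn; apply HM; lia.
Qed.

Lemma eventually_forall_list (I : Type) (l : list I) (P : I -> nat -> Prop) :
  (forall i, In i l -> exists N, forall k, (N <= k)%nat -> P i k) ->
  exists N, forall i k, In i l -> (N <= k)%nat -> P i k.
Proof.
  induction l as [|i0 l IH]; intros H.
  - exists 0%nat; intros i k [].
  - destruct (H i0 (or_introl eq_refl)) as [N0 HN0].
    destruct IH as [N HN]; [intros i Hi; apply H; right; exact Hi|].
    exists (Nat.max N0 N); intros i k [<-|Hi] Hk; [apply HN0 | apply HN]; auto; lia.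
Qed.

Lemma uniform_gap_list (I : Type) (l : list I) (v : I -> R) (h : R) :
  (forall i, In i l -> v i < h) -> exists d, 0 < d /\ forall i, In i l -> v i <= h - d.
Proof.
  induction l as [|i0 l IH]; intros H.
  - exists 1; split; [lra | intros i []].
  - destruct IH as [d [Hd HdI]]; [intros i Hi; apply H; right; exact Hi|].
    pose proof (H i0 (or_introl eq_refl)).
    exists (Rmin d (h - v i0)); split; [apply Rmin_glb_lt; lra|].
    pose proof (Rmin_l d (h - v i0)); pose proof (Rmin_r d (h - v i0)).
    intros i [<-|Hi]; [lra | specialize (HdI i Hi); lra].
Qed.

Lemma limit_rate_of_max (I : Type) (l : list I) (u : nat -> R) (v : I -> nat -> R)
  (h c : R) (hv : I -> R) :
  (forall i, In i l) ->
  Un_cv (fun k => u k / INR k) h -> (forall i, Un_cv (fun k => v i k / INR k) (hv i)) ->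
  (forall i k, v i k <= u k) -> (forall k, exists i, u k <= c + v i k) ->
  (forall i, hv i <= h) /\ exists i, h = hv i.
Proof.
  intros Hl Hu Hv Hle Hmax.
  assert (Hhv : forall i, hv i <= h).
  { intro i; apply (Un_cv_le_eventually _ _ _ _ 1%nat) with (2 := Hv i) (3 := Hu).
    intros n Hn; unfold Rdiv; apply Rmult_le_compat_r; [|apply Hle].
    left; apply Rinv_0_lt_compat, lt_0_INR; lia. }
  split; [exact Hhv|].
  apply NNPP; intros Hne.
  (* Otherwise all h_i <= h - d, and the rates force u(k)/k < h - d/3 eventually. *)
  destruct (uniform_gap_list I l hv h) as [d [Hd Hgap]].
  { intros i _; destruct (Rle_lt_or_eq_dec _ _ (Hhv i)) as [Hlt|Heq]; [exact Hlt|].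
    exfalso; apply Hne; exists i; auto. }
  destruct (eventually_forall_list I l (fun i k => v i k / INR k < hv i + d / 3))
    as [N1 HN1].
  { intros i _; destruct (Hv i (d / 3)) as [N HN]; [lra|].
    exists N; intros k Hk; specialize (HN k Hk).
    unfold Rdist in HN; apply Rabs_def2 in HN; lra. }
  destruct (Hu (d / 3)) as [N2 HN2]; [lra|].
  destruct (const_div_eventually_small c (d / 3)) as [N3 HN3]; [lra|].
  set (k := Nat.max 1 (Nat.max N1 (Nat.max N2 N3))).
  destruct (Hmax k) as [i Hi].
  assert (Hk : 0 < INR k) by (apply lt_0_INR; lia).
  pose proof (HN1 i k (Hl i) ltac:(lia)).
  pose proof (HN2 k ltac:(lia)) as Huk; unfold Rdist in Huk; apply Rabs_def2 in Huk.
  pose proof (HN3 k ltac:(lia)).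
  assert (u k / INR k <= c / INR k + v i k / INR k).
  { unfold Rdiv; rewrite <- Rmult_plus_distr_r; apply Rmult_le_compat_r; [|exact Hi].
    left; apply Rinv_0_lt_compat; exact Hk. }
  specialize (Hgap i (Hl i)); lra.
Qed.

(* For a submultiplicative sequence lam >= 1, (1/k) log lam(k) converges, and its
   limit is the one picked by the choice operator (as in the definition of the
   algebraic entropy). *)
Lemma log_submultiplicative_limit (lam : nat -> nat) :
  (forall n, (1 <= lam n)%nat) -> (forall n k, (lam (n + k) <= lam n * lam k)%nat) ->
  Un_cv (fun k => Rdiv (ln (INR (lam k))) (INR k))
    (epsilon (inhabits R0) (fun l => Un_cv (fun k => Rdiv (ln (INR (lam k))) (INR k)) l)).
Proof.
  intros Hpos Hsub; apply epsilon_spec, (fekete (fun k => ln (INR (lam k)))).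
  - intro n; rewrite <- ln_1; apply ln_le; [lra|].
    change 1 with (INR 1); apply le_INR, Hpos.
  - intros n k; specialize (Hpos n) as Hn; specialize (Hpos k) as Hk.
    specialize (Hpos (n + k)%nat) as Hnk.
    rewrite <- ln_mult by (apply lt_0_INR; lia).
    apply ln_le; [apply lt_0_INR; lia|].
    rewrite <- mult_INR; apply le_INR, Hsub.
Qed.

Lemma ln_INR_le_mul (a b c : nat) : (1 <= a)%nat -> (1 <= c)%nat -> (a <= b * c)%nat ->
  ln (INR a) <= ln (INR b) + ln (INR c).
Proof.
  intros Ha Hc Hab; assert (Hb : (1 <= b)%nat) by nia.
  rewrite <- ln_mult by (apply lt_0_INR; lia).
  apply ln_le; [apply lt_0_INR; lia|].
  rewrite <- mult_INR; apply le_INR; lia.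
Qed.

Lemma ln_INR_le (a b : nat) : (1 <= a)%nat -> (a <= b)%nat -> ln (INR a) <= ln (INR b).
Proof. intros Ha Hab; apply ln_le; [apply lt_0_INR; lia | apply le_INR; exact Hab]. Qed.

End RealAnalysis.

From HB Require Import structures.
From mathcomp Require Import all_boot all_order all_algebra.
From mathcomp Require Import zify ring.

Set Implicit Arguments.
Unset Strict Implicit.
Import GRing.Theory.

Section IdealLength.
Local Open Scope ring_scope.

Variable A : comNzRingType.
Implicit Types I J K M U X : A -> Prop.

Definition whole : A -> Prop := fun _ => True.
Definition zero_ideal : A -> Prop := fun x => x = 0.
Definition isum I J : A -> Prop := fun x => exists i j, I i /\ J j /\ x = i + j.
Definition principal (y : A) : A -> Prop := fun x => exists r, x = r * y.
Definition icap I J : A -> Prop := fun x => I x /\ J x.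

Lemma ideal0 I : is_ideal I -> I 0. Proof. by case. Qed.
Lemma idealD I x y : is_ideal I -> I x -> I y -> I (x + y).
Proof. by case=> _ [hD _]; apply: hD. Qed.
Lemma idealM I r x : is_ideal I -> I x -> I (r * x).
Proof. by case=> _ [_ hM]; apply: hM. Qed.
Lemma idealMr I r x : is_ideal I -> I x -> I (x * r).
Proof. by move=> hI hx; rewrite mulrC; apply: idealM. Qed.
Lemma idealB I x y : is_ideal I -> I x -> I y -> I (x - y).
Proof. by move=> hI hx hy; apply: idealD; rewrite // -mulN1r; apply: idealM. Qed.
Lemma ideal1_whole I : is_ideal I -> I 1 -> forall x, I x.
Proof. by move=> hI h1 x; rewrite -(mulr1 x); apply: idealM. Qed.

Lemma zero_ideal_ideal : is_ideal zero_ideal.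
Proof.
split; [by []|split]; first by move=> x y -> ->; rewrite addr0.
by move=> r x ->; rewrite mulr0.
Qed.

Lemma isum_ideal I J : is_ideal I -> is_ideal J -> is_ideal (isum I J).
Proof.
move=> hI hJ; split; [|split].
- by exists 0, 0; rewrite addr0; do !split; apply: ideal0.
- move=> x y [i [j [hi [hj ->]]]] [i' [j' [hi' [hj' ->]]]].
  by exists (i + i'), (j + j'); do !split; [exact: idealD|exact: idealD|rewrite addrACA].
- move=> r x [i [j [hi [hj ->]]]]; exists (r * i), (r * j).
  by do !split; [exact: idealM|exact: idealM|rewrite mulrDr].
Qed.

Lemma principal_ideal y : is_ideal (principal y).
Proof.
split; [|split]; first by exists 0; rewrite mul0r.
- by move=> x z [r ->] [s ->]; exists (r + s); rewrite mulrDl.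
- by move=> r x [s ->]; exists (r * s); rewrite mulrA.
Qed.

Lemma principal_self y : principal y y.
Proof. by exists 1; rewrite mul1r. Qed.

Lemma icap_ideal I J : is_ideal I -> is_ideal J -> is_ideal (icap I J).
Proof.
move=> hI hJ; split; [|split]; first by split; apply: ideal0.
- by move=> x y [h1 h2] [h3 h4]; split; apply: idealD.
- by move=> r x [h1 h2]; split; apply: idealM.
Qed.

Lemma colon_ideal I y : is_ideal I -> is_ideal (fun r => I (r * y)).
Proof.
move=> hI; split; [|split]; first by rewrite mul0r; apply: ideal0.
- by move=> u v hu hv; rewrite mulrDl; apply: idealD.
- by move=> r u hu; rewrite -mulrA; apply: idealM.
Qed.

Lemma isum_subl I J : is_ideal J -> subset_pr I (isum I J).
Proof. by move=> hJ x hx; exists x, 0; rewrite addr0; do !split=> //; apply: ideal0. Qed.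
Lemma isum_subr I J : is_ideal I -> subset_pr J (isum I J).
Proof. by move=> hI x hx; exists 0, x; rewrite add0r; do !split=> //; apply: ideal0. Qed.
Lemma isum_min I J K : is_ideal K -> subset_pr I K -> subset_pr J K ->
  subset_pr (isum I J) K.
Proof. by move=> hK hIK hJK x [i [j [hi [hj ->]]]]; apply: idealD => //; auto. Qed.
Lemma isum_mono I J I' J' : subset_pr I I' -> subset_pr J J' ->
  subset_pr (isum I J) (isum I' J').
Proof. by move=> hI hJ x [i [j [hi [hj ->]]]]; exists i, j; auto. Qed.
Lemma isum_zero I : is_ideal I -> subset_pr (isum I zero_ideal) I.
Proof. by move=> hI x [i [j [hi [-> ->]]]]; rewrite addr0. Qed.

Lemma gen_ideal (S : A -> Prop) : is_ideal (ideal_gen S).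
Proof.
split; [|split]; first by move=> I hI _; apply: ideal0.
- by move=> x y hx hy I hI hS; apply: idealD => //; [apply: hx|apply: hy].
- by move=> r x hx I hI hS; apply: idealM => //; apply: hx.
Qed.
Lemma gen_sub (S : A -> Prop) : subset_pr S (ideal_gen S).
Proof. by move=> x hx I hI hS; apply: hS. Qed.
Lemma gen_min (S : A -> Prop) I : is_ideal I -> subset_pr S I ->
  subset_pr (ideal_gen S) I.
Proof. by move=> hI hS x hx; apply: hx. Qed.
Lemma gen_mono (S S' : A -> Prop) : subset_pr S S' ->
  subset_pr (ideal_gen S) (ideal_gen S').
Proof. by move=> h; apply: gen_min; [apply: gen_ideal|move=> x /h; apply: gen_sub]. Qed.
Lemma image_mono (B : comNzRingType) (f : A -> B) (S S' : A -> Prop) : subset_pr S S' ->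
  subset_pr (image_pr f S) (image_pr f S').
Proof. by move=> h y [x [hx ->]]; exists x; split=> //; apply: h. Qed.

Definition strict_chain I K n := exists c : nat -> (A -> Prop),
  (forall k, is_ideal (c k)) /\ subset_pr I (c 0%N) /\ subset_pr (c n) K /\
  (forall k, (k < n)%N -> ssubset_pr (c k) (c k.+1)).

(* length_le I K B : every strict chain of ideals between I and K has length at
   most B, i.e. the length of K/I as an A-module is at most B. *)
Definition length_le I K (B : nat) := forall n, strict_chain I K n -> (n <= B)%N.

Lemma chain_increasing (c : nat -> A -> Prop) n :
  (forall k, (k < n)%N -> ssubset_pr (c k) (c k.+1)) ->
  forall j k, (j <= k)%N -> (k <= n)%N -> subset_pr (c j) (c k).
Proof.
move=> hc j k hjk; elim: k hjk => [|k IH] hjk hkn; first by have -> : j = 0%N by lia.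
move=> x hx; have [<-|nej] := eqVneq j k.+1; first exact: hx.
by apply: (proj1 (hc k hkn)); apply: IH => //; lia.
Qed.

Lemma strict_chain_widen I K I' K' n : subset_pr I I' -> subset_pr K' K ->
  strict_chain I' K' n -> strict_chain I K n.
Proof.
move=> hI hK [c [hi [h0 [hn hs]]]]; exists c; split=> //.
by split; [move=> x /hI /h0|split=> // x /hn /hK].
Qed.

Lemma length_le_narrow I K I' K' B : subset_pr I I' -> subset_pr K' K ->
  length_le I K B -> length_le I' K' B.
Proof. by move=> hI hK hl n hc; apply: hl; apply: strict_chain_widen hc. Qed.

Lemma length_le_weaken I K B B' : (B <= B')%N -> length_le I K B -> length_le I K B'.
Proof. by move=> hB hl n hc; apply: leq_trans (hl n hc) hB. Qed.

Lemma length_le_trivial I K : subset_pr K I -> length_le I K 0.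
Proof.
move=> hKI [|n] // [c [hi [h0 [hn hs]]]]; exfalso.
have [_ [x [hx1 hx0]]] := hs 0%N (ltn0Sn n).
apply: hx0; apply: h0; apply: hKI; apply: hn.
exact: (chain_increasing hs (j := 1)).
Qed.

Lemma strict_chain0 I K : is_ideal I -> subset_pr I K -> strict_chain I K 0.
Proof.
by move=> hI hK; exists (fun _ => I); split=> //; split=> //; split=> // k; rewrite ltn0.
Qed.

Lemma strict_chain_snoc X Y Z n : strict_chain X Y n -> is_ideal Z ->
  ssubset_pr Y Z -> strict_chain X Z n.+1.
Proof.
move=> [c [hi [h0 [hn hs]]]] hZ [hYZ [z [hz1 hz2]]].
exists (fun k => if (k <= n)%N then c k else Z); split; [|split; [|split]].
- by move=> k; case: ifP.
- by [].
- by rewrite ltnn.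
- move=> k hk; rewrite ltnS in hk; rewrite hk.
  case: (ltnP k n) => hkn; first exact: hs.
  have -> : k = n by apply/eqP; rewrite eqn_leq hk hkn.
  split; first by move=> x hx; apply: hYZ; apply: hn.
  by exists z; split=> // hc; apply: hz2; apply: hn.
Qed.

Lemma strict_chain_cons X K n (d : nat -> A -> Prop) : is_ideal X ->
  (forall k, is_ideal (d k)) -> subset_pr (d n) K ->
  (forall k, (k < n)%N -> ssubset_pr (d k) (d k.+1)) -> ssubset_pr X (d 0%N) ->
  strict_chain X K n.+1.
Proof.
move=> hX hi hn hs h0.
exists (fun k => if k == 0%N then X else d k.-1); split; [|split; [|split]] => //.
- by move=> k; case: ifP.
- by move=> [|k] hk //=; apply: hs.
Qed.

Lemma strict_chain_insert n (c : nat -> A -> Prop) j D :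
  (forall k, is_ideal (c k)) -> (forall k, (k < n)%N -> ssubset_pr (c k) (c k.+1)) ->
  (j < n)%N -> is_ideal D -> ssubset_pr (c j) D -> ssubset_pr D (c j.+1) ->
  strict_chain (c 0%N) (c n) n.+1.
Proof.
move=> hi hs hj hD h1 h2.
exists (fun k => if (k <= j)%N then c k else if k == j.+1 then D else c k.-1).
split; [|split; [|split]].
- by move=> k; case: ifP => // _; case: ifP.
- by [].
- have -> : (n.+1 <= j)%N = false by lia.
  by have -> : (n.+1 == j.+1) = false by lia.
- move=> k hk; case: (ltngtP k j) => hkj.
  + by apply: hs; lia.
  + have -> : (k.+1 == j.+1) = false by lia.
    case: (eqVneq k j.+1) => [->|nek] //=.
    by have := hs k.-1 ltac:(lia); have -> : k.-1.+1 = k by lia.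
  + by rewrite hkj eqxx.
Qed.

(* A strict inclusion c < c' stays strict after intersecting with M or after
   adding M (this is the modular law behind the additivity of length). *)
Lemma strict_step_dichotomy M c c' : is_ideal c -> is_ideal c' -> is_ideal M ->
  ssubset_pr c c' ->
  ssubset_pr (icap c M) (icap c' M) \/ ssubset_pr (isum c M) (isum c' M).
Proof.
move=> hc hc' hM [hsub [x [hx1 hx2]]].
case: (classic (exists y, icap c' M y /\ ~ icap c M y)) => [hcap|hnocap].
  by left; split=> // y [h1 h2]; split=> //; apply: hsub.
right; split; first exact: isum_mono.
exists x; split; first exact: isum_subl.
move=> [y [z [hy [hz ex]]]]; apply: hx2.
have hzc : icap c M z.
  apply: NNPP => hn; apply: hnocap; exists z; do !split=> //.
  have -> : z = x - y by rewrite ex addrC addKr.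
  by apply: idealB => //; apply: hsub.
by rewrite ex; apply: idealD => //; case: hzc.
Qed.

Lemma strict_chain_split M (c : nat -> A -> Prop) n : is_ideal M ->
  (forall k, is_ideal (c k)) -> (forall k, (k < n)%N -> ssubset_pr (c k) (c k.+1)) ->
  forall j, (j <= n)%N -> exists p q, (p + q = j)%N /\
    strict_chain (icap (c 0%N) M) (icap (c j) M) p /\
    strict_chain (isum (c 0%N) M) (isum (c j) M) q.
Proof.
move=> hM hi hs; elim=> [|j IH] hj.
  exists 0%N, 0%N; split=> //.
  by split; apply: strict_chain0 => //; [apply: icap_ideal|apply: isum_ideal].
have [p [q [epq [hp hq]]]] := IH (ltnW hj).
have hcj := proj1 (hs j hj).
case: (strict_step_dichotomy (hi j) (hi j.+1) hM (hs j hj)) => hstep.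
- exists p.+1, q; split; first by rewrite addSn epq.
  split; first exact: strict_chain_snoc hp (icap_ideal _ _) hstep.
  by apply: strict_chain_widen hq => //; apply: isum_mono.
- exists p, q.+1; split; first by rewrite addnS epq.
  split; last exact: strict_chain_snoc hq (isum_ideal _ _) hstep.
  by apply: strict_chain_widen hp => // y [h1 h2]; split=> //; apply: hcj.
Qed.

Lemma length_le_add I M K B1 B2 : is_ideal K -> is_ideal M ->
  subset_pr I M -> subset_pr M K ->
  length_le I M B1 -> length_le M K B2 -> length_le I K (B1 + B2).
Proof.
move=> hK hM hIM hMK h1 h2 n [c [hi [h0 [hn hs]]]].
have [p [q [epq [hp hq]]]] := strict_chain_split hM hi hs (leqnn n).
rewrite -epq; apply: leq_add.
- apply: h1; apply: strict_chain_widen hp; last by move=> x [].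
  by move=> x hx; split; [apply: h0|apply: hIM].
- apply: h2; apply: strict_chain_widen hq; first by apply: isum_subr; apply: hi.
  by apply: isum_min => // x hx; apply: hn.
Qed.

(* Cyclic steps.  If K <= I + Ay and U y <= I, then K/I is a quotient of A/U, so
   l(K/I) <= l(A/U): a chain c_k from I to K pulls back to the chain (c_k : y). *)
Lemma length_le_cyclic I K U y B :
  subset_pr K (isum I (principal y)) -> (forall r, U r -> I (r * y)) ->
  length_le U whole B -> length_le I K B.
Proof.
move=> hK hUy hB n [c [hi [h0 [hn hs]]]].
have hc0 k : (k <= n)%N -> subset_pr I (c k).
  by move=> hk x /h0; apply: (chain_increasing hs (j := 0)).
apply: hB; exists (fun k r => c k (r * y)); split; [|split; [|split]].
- by move=> k; apply: colon_ideal.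
- by move=> r /hUy /h0.
- by [].
- move=> k hk; have [hsub [z [hz1 hz2]]] := hs k hk.
  split; first by move=> r /hsub.
  have hzK : K z by apply: hn; apply: (chain_increasing hs (j := k.+1)).
  have [i [w [hiI [[r ->] ez]]]] := hK z hzK.
  exists r; split.
  + have -> : r * y = z - i by rewrite ez addrC addKr.
    by apply: idealB => //; apply: hsub; apply: (hc0 k (ltnW hk)).
  + by move=> hr; apply: hz2; rewrite ez; apply: idealD => //; apply: (hc0 k (ltnW hk)).
Qed.

Lemma length_le_residue_field m : local_ring m -> length_le m whole 1.
Proof.
move=> [hm [hm1 hunit]] [|[|n]] // [c [hi [h0 [hn hs]]]]; exfalso.
have [_ [x [hx1 hx2]]] := hs 0%N isT.
have [_ [z [hz1 hz2]]] := hs 1%N isT.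
have [y hy] : exists y, x * y = 1 by apply: hunit => /h0.
by apply: hz2; apply: ideal1_whole => //; rewrite -hy; apply: idealMr.
Qed.

Fixpoint span (ys : seq A) : A -> Prop :=
  if ys is y :: ys' then isum (principal y) (span ys') else zero_ideal.

Lemma span_ideal ys : is_ideal (span ys).
Proof.
elim: ys => [|y ys IH] /=; first exact: zero_ideal_ideal.
by apply: isum_ideal => //; apply: principal_ideal.
Qed.

Lemma mem_span ys y : y \in ys -> span ys y.
Proof.
elim: ys => [|z ys IH] //=; rewrite in_cons => /orP [/eqP ->|hy].
- by apply: isum_subl; [apply: span_ideal|apply: principal_self].
- by apply: isum_subr; [apply: principal_ideal|apply: IH].
Qed.

Lemma isum_assoc_sub I J K : subset_pr (isum I (isum J K)) (isum (isum I J) K).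
Proof.
move=> x [i [z [hi [[j [k [hj [hk ->]]]] ->]]]].
by exists (i + j), k; rewrite addrA; do !split=> //; exists i, j.
Qed.

Lemma length_le_span I U ys B : is_ideal I ->
  (forall w, w \in ys -> forall r, U r -> I (r * w)) -> length_le U whole B ->
  length_le I (isum I (span ys)) (size ys * B).
Proof.
move=> + + hB; elim: ys I => [|w ws IH] I hI hw /=.
  by apply: length_le_trivial; apply: isum_zero.
have hw0 : forall r, U r -> I (r * w) by apply: hw; rewrite in_cons eqxx.
set M := isum I (principal w).
have hM : is_ideal M by apply: isum_ideal => //; apply: principal_ideal.
have hS : is_ideal (isum I (isum (principal w) (span ws))).
  by apply: isum_ideal => //; apply: isum_ideal; [apply: principal_ideal|apply: span_ideal].
rewrite mulSn; apply: (length_le_add (M := M)) => //.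
- by apply: isum_subl; apply: principal_ideal.
- by apply: isum_mono => // x hx; apply: isum_subl => //; apply: span_ideal.
- exact: (length_le_cyclic (U := U) (y := w)).
- apply: (length_le_narrow _ _ (IH M hM _)) => //; first exact: isum_assoc_sub.
  move=> v hv r hr; apply: isum_subl; first exact: principal_ideal.
  by apply: hw => //; rewrite in_cons hv orbT.
Qed.

(* If y^k lies in I then l(A/I) <= k l(A/(I + Ay)): the ideals I + A y^j,
   j = 1..k, interpolate between I + Ay and I with cyclic steps. *)
Lemma length_le_power I y k B : is_ideal I -> I (y ^+ k) ->
  length_le (isum I (principal y)) whole B -> length_le I whole (k * B).
Proof.
move=> hI hyk hB; case: k hyk => [|k] hyk.
  by rewrite expr0 in hyk; apply: length_le_trivial => x _; apply: ideal1_whole.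
have hIy j : is_ideal (isum I (principal (y ^+ j))).
  by apply: isum_ideal => //; apply: principal_ideal.
have steps j : length_le (isum I (principal (y ^+ j.+1))) whole (j.+1 * B).
  elim: j => [|j IH]; first by rewrite expr1 mul1n.
  rewrite mulSn; apply: (length_le_add (M := isum I (principal (y ^+ j.+1)))) => //.
  - by apply: isum_mono => // x [r ->]; exists (r * y); rewrite exprSr; ring.
  - apply: (length_le_cyclic (U := isum I (principal y)) (y := y ^+ j.+1)) => //.
    + by apply: isum_mono => //; apply: isum_subl; apply: principal_ideal.
    + move=> r [i [t [hi [[u ->] ->]]]]; exists (i * y ^+ j.+1), (u * y ^+ j.+2).
      by do !split; [apply: idealMr|exists u|rewrite [y ^+ j.+2]exprSr; ring].
apply: (length_le_narrow _ _ (steps k)) => //.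
by apply: isum_min => // x [r ->]; apply: idealM.
Qed.

(* Over a Noetherian ring every ideal is finitely generated: otherwise adding
   one new element at a time yields a strictly ascending chain. *)
Lemma noetherian_fg I : noetherian A -> is_ideal I ->
  exists ys, (forall y, y \in ys -> I y) /\ subset_pr I (span ys).
Proof.
move=> hN hI; apply: NNPP => Hno.
have Hnext ys : exists x, (forall y, y \in ys -> I y) -> I x /\ ~ span ys x.
  case: (classic (forall y, y \in ys -> I y)) => hall; last by exists 0.
  apply: NNPP => hno; apply: Hno; exists ys; split=> // x hx.
  by apply: NNPP => hs; apply: hno; exists x.
pose next ys := epsilon (inhabits (0 : A))
  (fun x => (forall y, y \in ys -> I y) -> I x /\ ~ span ys x).
have hnext ys : (forall y, y \in ys -> I y) -> I (next ys) /\ ~ span ys (next ys).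
  exact: (epsilon_spec (inhabits (0 : A)) _ (Hnext ys)).
pose gens k := iter k (fun ys => next ys :: ys) [::].
have hgens k y : y \in gens k -> I y.
  elim: k y => [|k IH] y //=; rewrite in_cons => /orP [/eqP ->|]; last exact: IH.
  by case: (hnext _ (IH)).
have [N hNk] := hN (fun k => span (gens k)) (fun k => span_ideal _)
  (fun k => isum_subr (principal_ideal _)).
case: (hnext _ (hgens N)) => _; apply.
by apply: hNk (leqnSn N) _ _; apply: mem_span; rewrite /= in_cons eqxx.
Qed.

Lemma ex_maximum (P : nat -> Prop) B n0 : P n0 -> (forall n, P n -> (n <= B)%N) ->
  exists L, P L /\ forall n, P n -> (n <= L)%N.
Proof.
move=> h0; elim: B => [|B IH] hB.
  by exists 0%N; split=> //; have := hB _ h0; rewrite leqn0 => /eqP <-.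
case: (classic (P B.+1)) => hP; first by exists B.+1.
apply: IH => n hn; have := hB n hn; rewrite leq_eqVlt => /orP [/eqP e|//].
by rewrite e in hn.
Qed.

Lemma maximal_chain_ends X n : is_ideal X -> strict_chain X whole n ->
  length_le X whole n ->
  exists c : nat -> A -> Prop, (forall k, is_ideal (c k)) /\ eq_pr (c 0%N) X /\
    (forall x, c n x) /\ (forall k, (k < n)%N -> ssubset_pr (c k) (c k.+1)).
Proof.
move=> hX [c [hi [h0 [hn hs]]]] hmax.
exists c; split=> //; split; [|split=> //].
- move=> x; split=> [hx|]; last exact: h0.
  apply: NNPP => hnx; suff : (n.+1 <= n)%N by rewrite ltnn.
  by apply: hmax; apply: strict_chain_cons hX hi hn hs (conj h0 _); exists x.
- move=> x; apply: NNPP => hnx.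
  have hc : strict_chain X (c n) n by exists c; split; [|split; [|split]].
  suff : (n.+1 <= n)%N by rewrite ltnn.
  apply: hmax; apply: (strict_chain_snoc (Z := whole) hc) => //.
  by split=> //; exists x.
Qed.

Section MaximalChain.
Variables (X : A -> Prop) (n : nat) (c : nat -> A -> Prop).
Hypothesis hideal : forall k, is_ideal (c k).
Hypothesis hbottom : subset_pr X (c 0%N).
Hypothesis hstrict : forall k, (k < n)%N -> ssubset_pr (c k) (c k.+1).
Hypothesis hmaximal : length_le X whole n.

Lemma maximal_chain_saturated j D : (j < n)%N -> is_ideal D ->
  ssubset_pr (c j) D -> ~ ssubset_pr D (c j.+1).
Proof.
move=> hj hD h1 h2; suff : (n.+1 <= n)%N by rewrite ltnn.
apply: hmaximal; apply: strict_chain_widen hbottom _ _ => //.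
exact: strict_chain_insert hideal hstrict hj hD h1 h2.
Qed.

Lemma maximal_chain_step_principal j x : (j < n)%N -> c j.+1 x -> ~ c j x ->
  subset_pr (c j.+1) (isum (c j) (principal x)).
Proof.
move=> hj hx1 hx2; have hsub := proj1 (hstrict hj).
have hcj := hideal j; have hcj1 := hideal j.+1.
have hD : is_ideal (isum (c j) (principal x)).
  by apply: isum_ideal => //; apply: principal_ideal.
move=> z hz; apply: NNPP => hnz; apply: (maximal_chain_saturated hj hD).
- split; first by apply: isum_subl; apply: principal_ideal.
  by exists x; split=> //; apply: isum_subr => //; apply: principal_self.
- split; last by exists z.
  by apply: isum_min => // w [r ->]; apply: idealM.
Qed.

(* In a local ring (A, m) such an x also satisfies m x <= c_j: otherwise
   c_j + m x would lie strictly between c_j and c_(j+1), as x is not in it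
   (1 - r is a unit for r in m). *)
Lemma maximal_chain_step_annihilated m j x : local_ring m -> (j < n)%N ->
  c j.+1 x -> ~ c j x -> forall r, m r -> c j (r * x).
Proof.
move=> [hm [hm1 hunit]] hj hx1 hx2; have hsub := proj1 (hstrict hj).
have hcj := hideal j; have hcj1 := hideal j.+1.
pose mx := fun z => exists r, m r /\ z = r * x.
have hmx : is_ideal mx.
  split; [|split]; first by exists 0; rewrite mul0r; split=> //; apply: ideal0.
  + move=> u v [r [hr ->]] [s [hs' ->]]; exists (r + s).
    by rewrite mulrDl; split=> //; apply: idealD.
  + by move=> t u [r [hr ->]]; exists (t * r); rewrite mulrA; split=> //; apply: idealM.
have hD : is_ideal (isum (c j) mx) by apply: isum_ideal.
have hxD : ~ isum (c j) mx x.
  move=> [u [w [hu [[r [hr ->]] ex]]]].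
  have h1r : ~ m (1 - r).
    by move=> h; apply: hm1; rewrite -(subrK r 1); apply: idealD.
  have [v hv] := hunit _ h1r.
  apply: hx2; have -> : x = v * u.
    have -> : u = (1 - r) * x by rewrite mulrBl mul1r {1}ex addrK.
    by rewrite mulrA [v * _]mulrC hv mul1r.
  exact: idealM.
move=> r hr; apply: NNPP => hn; apply: (maximal_chain_saturated hj hD).
- split; first by apply: isum_subl.
  by exists (r * x); split=> //; apply: isum_subr => //; exists r.
- split; last by exists x.
  by apply: isum_min => // w [s [hs' ->]]; apply: idealM.
Qed.

Lemma maximal_chain_simple_step m j : local_ring m -> (j < n)%N ->
  exists x, subset_pr (c j.+1) (isum (c j) (principal x)) /\
    (forall r, m r -> c j (r * x)).
Proof.
move=> hloc hj; have [_ [x [hx1 hx2]]] := hstrict hj.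
exists x; split; first exact: maximal_chain_step_principal.
exact: maximal_chain_step_annihilated hloc hj hx1 hx2.
Qed.

End MaximalChain.

Definition ring_endo (f : A -> A) := (forall x y, f (x + y) = f x + f y) /\
  (forall x y, f (x * y) = f x * f y) /\ f 1 = 1.

Lemma ring_endo0 f : ring_endo f -> f 0 = 0.
Proof. by move=> [fD _]; apply: (addrI (f 0)); rewrite -fD !addr0. Qed.

Lemma iter_ring_endo (phi : {rmorphism A -> A}) n : ring_endo (iter n phi).
Proof.
elim: n => [|n [fD [fM f1]]]; first by split; [|split].
by split; [|split] => /= [x y|x y|]; rewrite ?fD ?fM ?f1 ?rmorphD ?rmorphM ?rmorph1.
Qed.

Lemma gen_image_sub f (S : A -> Prop) I : ring_endo f -> is_ideal I ->
  subset_pr (image_pr f S) I -> forall x, ideal_gen S x -> I (f x).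
Proof.
move=> hf hI hS x hx; have [fD [fM _]] := hf.
have hP : is_ideal (fun z => I (f z)).
  split; [|split]; first by rewrite ring_endo0 //; apply: ideal0.
  - by move=> u v hu hv; rewrite fD; apply: idealD.
  - by move=> r u hu; rewrite fM; apply: idealM.
by apply: (gen_min hP) hx => z hz; apply: hS; exists z.
Qed.

Definition extension (f : A -> A) b (c : A -> Prop) := isum (ideal_gen (image_pr f c)) b.

Lemma extension_ideal f b c : is_ideal b -> is_ideal (extension f b c).
Proof. by move=> hb; apply: isum_ideal => //; apply: gen_ideal. Qed.

Lemma extension_mono f b c c' : subset_pr c c' ->
  subset_pr (extension f b c) (extension f b c').
Proof. by move=> h; apply: isum_mono => //; apply: gen_mono; apply: image_mono. Qed.

(* One simple step of a chain, seen after extension along f: if c' <= c + Ax and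
   m x <= c, then l(ext c' / ext c) <= l(A / ext m), because ext c' is obtained
   from ext c by adding the single element f(x), which ext m multiplies into
   ext c. *)
Lemma length_le_extension_step m f b c c' x B : ring_endo f -> is_ideal b ->
  subset_pr c' (isum c (principal x)) -> (forall r, m r -> c (r * x)) ->
  length_le (extension f b m) whole B -> length_le (extension f b c) (extension f b c') B.
Proof.
move=> hf hb hc' hmx hB; have [fD [fM _]] := hf.
have hE := extension_ideal f c hb.
have hEx : is_ideal (isum (extension f b c) (principal (f x))).
  by apply: isum_ideal => //; apply: principal_ideal.
apply: (length_le_cyclic (y := f x)) hB => //.
  apply: isum_min => //; last first.
    move=> z hz; apply: isum_subl; first exact: principal_ideal.
    by apply: isum_subr => //; apply: gen_ideal.
  apply: gen_min => // z [w [hw ->]]; have [u [t [hu [[r ->] ->]]]] := hc' w hw.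
  rewrite fD fM; exists (f u), (f r * f x); split; last by split=> //; exists (f r).
  by apply: isum_subl => //; apply: gen_sub; exists u.
move=> r [g [t [hg [ht ->]]]]; rewrite mulrDl; apply: idealD => //.
  apply: (gen_min (colon_ideal (f x) hE)) hg => z [r' [hr' ->]].
  by rewrite -fM; apply: isum_subl => //; apply: gen_sub; exists (r' * x); split=> //; apply: hmx.
by apply: isum_subr; [apply: gen_ideal|apply: idealMr].
Qed.

(* Refine A/I by a chain of
   maximal length: every step is simple, and contributes at most l(A/ext m). *)
Lemma length_le_extension m f b I L1 L2 : local_ring m -> ring_endo f -> is_ideal b ->
  is_ideal I -> length_le I whole L1 -> length_le (extension f b m) whole L2 ->
  length_le (extension f b I) whole (L1 * L2).
Proof.
move=> hloc hf hb hI h1 h2.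
have [L [hL hLmax]] := ex_maximum (strict_chain0 hI (fun _ _ => Logic.I)) h1.
have [c [hi [h0 [hn hs]]]] := maximal_chain_ends hI hL hLmax.
have hbot : subset_pr I (c 0%N) by move=> x /h0.
have steps j : (j <= L)%N ->
    length_le (extension f b (c 0%N)) (extension f b (c j)) (j * L2).
  elim: j => [|j IH] hj; first exact: length_le_trivial.
  have [x [hx1 hx2]] := maximal_chain_simple_step hi hbot hs hLmax hloc hj.
  rewrite mulSnr; apply: (length_le_add (M := extension f b (c j))).
  - exact: extension_ideal.
  - exact: extension_ideal.
  - by apply: extension_mono; apply: (chain_increasing hs) => //; lia.
  - exact: extension_mono (proj1 (hs j hj)).
  - by apply: IH; lia.
  - exact: length_le_extension_step hf hb hx1 hx2 h2.
have [_ [_ f1]] := hf.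
have htop : subset_pr whole (extension f b (c L)).
  move=> z _; apply: ideal1_whole; first exact: extension_ideal.
  by apply: isum_subl => //; apply: gen_sub; exists 1; split; [apply: hn|rewrite f1].
apply: (length_le_weaken (leq_mul (h1 L hL) (leqnn L2))).
by apply: (length_le_narrow _ htop (steps L (leqnn L))); apply: extension_mono => x /h0.
Qed.

Section IterateImages.
Variables (m : A -> Prop) (phi : {rmorphism A -> A}).
Hypothesis hloc : local_ring m.
Hypothesis hfl : finite_length_selfmap m phi.
Hypothesis hnoe : noetherian A.

Definition image_ideal n := ideal_gen (image_pr (iter n phi) m).

Lemma max_ideal : is_ideal m. Proof. by case: hloc. Qed.

Lemma image_ideal_sub_max n : subset_pr (image_ideal n) m.
Proof.
apply: gen_min; first exact: max_ideal.
elim: n => [|n IH] y [x [hx ->]] //=.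
case: hfl => himg _; apply: himg; exists (iter n phi x); split=> //.
by apply: IH; exists x.
Qed.

Lemma extension_image_ideal b n k : is_ideal b -> (forall x, b x -> b (iter n phi x)) ->
  subset_pr (extension (iter n phi) b (isum (image_ideal k) b))
            (isum (image_ideal (n + k)) b).
Proof.
move=> hb hbit.
have hK : is_ideal (isum (image_ideal (n + k)) b) by apply: isum_ideal => //; apply: gen_ideal.
apply: isum_min => //; last by apply: isum_subr => //; apply: gen_ideal.
apply: gen_min => // z [w [[j [t [hj [ht ->]]]] ->]].
have [fD _] := iter_ring_endo phi n.
rewrite fD; apply: idealD => //; last by apply: isum_subr; [apply: gen_ideal|apply: hbit].
apply: isum_subl => //; apply: (gen_image_sub (iter_ring_endo phi n) (gen_ideal _)) hj.
by move=> y [x [[x' [hx' ->]] ->]]; apply: gen_sub; exists x'; rewrite iterD.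
Qed.

Lemma length_le_image_ideal_mul b n k L1 L2 : is_ideal b ->
  (forall x, b x -> b (iter n phi x)) ->
  length_le (isum (image_ideal k) b) whole L1 -> length_le (isum (image_ideal n) b) whole L2 ->
  length_le (isum (image_ideal (n + k)) b) whole (L1 * L2).
Proof.
move=> hb hbit h1 h2.
have := length_le_extension hloc (iter_ring_endo phi n) hb (isum_ideal (gen_ideal _) hb) h1 h2.
by apply: length_le_narrow => //; apply: extension_image_ideal.
Qed.

Lemma finite_length_of_powers ys I : is_ideal I ->
  (forall y, y \in ys -> exists k, I (y ^+ k)) ->
  (exists B, length_le (isum I (span ys)) whole B) -> exists B, length_le I whole B.
Proof.
elim: ys I => [|y ys IH] I hI hy [B hB].
  by exists B; apply: (length_le_narrow _ _ hB) => //; apply: isum_zero.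
have hIy : is_ideal (isum I (principal y)) by apply: isum_ideal => //; apply: principal_ideal.
have [B' hB'] : exists B', length_le (isum I (principal y)) whole B'.
  apply: IH => //.
  + move=> z hz; have [k hk] := hy z ltac:(by rewrite in_cons hz orbT).
    by exists k; apply: isum_subl => //; apply: principal_ideal.
  + by exists B; apply: (length_le_narrow _ _ hB) => //; apply: isum_assoc_sub.
have [k hk] := hy y ltac:(by rewrite in_cons eqxx).
by exists (k * B'); exact: (length_le_power hI hk hB').
Qed.

Lemma image_ideal_finite_length n : exists B, length_le (image_ideal n) whole B.
Proof.
have hres : length_le m whole 1 := length_le_residue_field hloc.
have hz x : zero_ideal x -> zero_ideal (iter 1 phi x) by move=> ->; rewrite /= rmorph0.
have hzI k B : length_le (image_ideal k) whole B ->
    length_le (isum (image_ideal k) zero_ideal) whole B.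
  by apply: length_le_narrow => //; apply: isum_subl; apply: zero_ideal_ideal.
(* phi(m)A is m-primary, and m is finitely generated. *)
have [B1 hB1] : exists B, length_le (image_ideal 1) whole B.
  have [ys [hys hm]] := noetherian_fg hnoe max_ideal.
  apply: (finite_length_of_powers (ys := ys)); first exact: gen_ideal.
  - by move=> y hy; case: hfl => _ [_ hprim]; apply: hprim; apply: hys.
  - exists 1%N; apply: (length_le_narrow _ _ hres) => //.
    by move=> x hx; apply: isum_subr; [apply: gen_ideal|apply: hm].
elim: n => [|n [B hB]].
  by exists 1%N; apply: (length_le_narrow _ _ hres) => // x hx; apply: gen_sub; exists x.
have := length_le_image_ideal_mul zero_ideal_ideal hz (hzI _ _ hB) (hzI _ _ hB1).
rewrite add1n => h; exists (B * B1); apply: (length_le_narrow _ _ h) => //.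
by apply: isum_zero; apply: gen_ideal.
Qed.

End IterateImages.

End IdealLength.

Definition has_colength (A : comNzRingType) (I : A -> Prop) (L : nat) :=
  strict_chain I (@whole A) L /\ length_le I (@whole A) L.

Lemma colength_spec (A : comNzRingType) (X : A -> Prop) B : is_ideal X ->
  length_le X (@whole A) B -> has_colength X (colength X).
Proof.
move=> hX hB.
have [L [hL hLmax]] := ex_maximum (strict_chain0 hX (fun _ _ => Logic.I)) hB.
have hic k : ideal_chain X k -> strict_chain X (@whole A) k.
  move=> [c [hi [h0 [hn hs]]]]; exists c; split=> //; split; last by split.
  by move=> x hx; apply: (proj2 (h0 x)).
have hcl : colength_is X L.
  split; last by move=> k hk; apply: hLmax; apply: hic.
  have [c [hi [h0 [hn hs]]]] := maximal_chain_ends hX hL hLmax.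
  by exists c; split=> //; split=> //; split=> // x.
have hcol : colength_is X (colength X).
  exact: (epsilon_spec (inhabits 0%N) _ (ex_intro _ L hcl)).
have -> : colength X = L.
  by apply/eqP; rewrite eqn_leq (proj2 hcl _ (proj1 hcol)) (proj2 hcol _ (proj1 hcl)).
by [].
Qed.

Section Quotient.
Variables (A Q : comNzRingType) (pi : {rmorphism A -> Q}) (b : A -> Prop).
Hypothesis hquot : quotient_map pi b.
Local Open Scope ring_scope.

Definition preimage (X : Q -> Prop) : A -> Prop := fun x => X (pi x).

Lemma preimage_ideal X : is_ideal X -> is_ideal (preimage X).
Proof.
move=> hX; split; [|split]; rewrite /preimage.
- by rewrite rmorph0; apply: ideal0.
- by move=> x y hx hy; rewrite rmorphD; apply: idealD.
- by move=> r x hx; rewrite rmorphM; apply: idealM.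
Qed.

Lemma image_ideal_quot (X : A -> Prop) : is_ideal X -> is_ideal (image_pr pi X).
Proof.
case: hquot => hsurj _ hX; split; [|split].
- by exists 0; rewrite rmorph0; split=> //; apply: ideal0.
- move=> x y [u [hu ->]] [v [hv ->]]; exists (u + v).
  by rewrite rmorphD; split=> //; apply: idealD.
- move=> r x [u [hu ->]]; have [r' <-] := hsurj r.
  by exists (r' * u); rewrite rmorphM; split=> //; apply: idealM.
Qed.

Lemma kernel_sub_preimage X : is_ideal X -> subset_pr b (preimage X).
Proof. by case: hquot => _ hk hX x hx; rewrite /preimage (proj2 (hk x) hx); apply: ideal0. Qed.

(* Ideals of Q = A/b correspond to ideals of A containing b, so chains in Q
   above X correspond to chains in A above the preimage of X. *)
Lemma strict_chain_quotient X n : is_ideal X ->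
  strict_chain X (@whole Q) n <-> strict_chain (preimage X) (@whole A) n.
Proof.
case: hquot => hsurj hk hX; split.
- move=> [c [hi [h0 [hn hs]]]].
  exists (fun k => preimage (c k)); split; first by move=> k; apply: preimage_ideal.
  split; first by move=> x hx; apply: h0.
  split=> // k hk'; have [hsub [z [hz1 hz2]]] := hs k hk'.
  split; first by move=> x hx; apply: hsub.
  by have [u eu] := hsurj z; exists u; rewrite /preimage eu.
- move=> [c [hi [h0 [hn hs]]]].
  exists (fun k => image_pr pi (c k)); split; first by move=> k; apply: image_ideal_quot.
  split.
    by move=> q hqX; have [u eu] := hsurj q; exists u; split=> //; apply: h0; rewrite /preimage eu.
  split=> // k hk'; have [hsub [z [hz1 hz2]]] := hs k hk'.
  split; first exact: image_mono.
  exists (pi z); split; first by exists z.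
  move=> [u [hu eu]]; apply: hz2.
  have hb : b (z - u) by apply/hk; rewrite rmorphB eu subrr.
  have hzu : c k (z - u).
    apply: (chain_increasing hs (j := 0)) => //; first by lia.
    by apply: h0; apply: kernel_sub_preimage.
  by rewrite -(subrK u z); apply: idealD.
Qed.

Lemma lambda_quotient (m : A -> Prop) (phi : {rmorphism A -> A})
    (psi : {rmorphism Q -> Q}) n :
  local_ring m -> finite_length_selfmap m phi -> noetherian A ->
  (forall x, psi (pi x) = pi (phi x)) -> is_ideal b ->
  has_colength (isum (image_ideal m phi n) b) (lambda_it (image_pr pi m) psi n).
Proof.
move=> hloc hfl hnoe hcomm hb.
have hit k x : iter k psi (pi x) = pi (iter k phi x) by elim: k => //= k ->; rewrite hcomm.
pose X := ideal_gen (image_pr (iter n psi) (image_pr pi m)).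
have hX : is_ideal X by apply: gen_ideal.
have hS : is_ideal (isum (image_ideal m phi n) b) by apply: isum_ideal => //; apply: gen_ideal.
have hpreX : eq_pr (preimage X) (isum (image_ideal m phi n) b).
  move=> u; split=> hu.
  - have : image_pr pi (isum (image_ideal m phi n) b) (pi u).
      apply: (gen_min (image_ideal_quot hS)) hu => q [y [[x [hx ->]] ->]].
      exists (iter n phi x); rewrite hit; split=> //.
      by apply: isum_subl => //; apply: gen_sub; exists x.
    case: hquot => _ hk [u' [hu' eu]].
    have hbu : b (u - u') by apply/hk; rewrite rmorphB eu subrr.
    by rewrite -(subrK u' u); apply: idealD => //; apply: isum_subr => //; apply: gen_ideal.
  - move: u hu; apply: isum_min; first exact: preimage_ideal.
    + apply: gen_min; first exact: preimage_ideal.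
      move=> y [x [hx ->]]; rewrite /preimage -hit; apply: gen_sub.
      by exists (pi x); split=> //; exists x.
    + exact: kernel_sub_preimage.
have hchain k : strict_chain X (@whole Q) k <->
    strict_chain (isum (image_ideal m phi n) b) (@whole A) k.
  rewrite strict_chain_quotient //; split; apply: strict_chain_widen => // x /hpreX //.
have [B hB] := image_ideal_finite_length hloc hfl hnoe n.
have hBQ : length_le X (@whole Q) B.
  move=> k /hchain hk; apply: hB; apply: strict_chain_widen hk => //.
  by apply: isum_subl.
have [hc hl] := colength_spec hX hBQ.
by split; [apply/hchain|move=> k /hchain; apply: hl].
Qed.

End Quotient.

Section ProductIdeal.
Variables (A : comNzRingType) (s : nat) (a : 'I_s -> A -> Prop).
Hypothesis hideal : forall i, is_ideal (a i).
Local Open Scope ring_scope.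

(* The partial product a_0 ... a_(t-1) (products over i >= t are left free). *)
Definition partial_prod (t : nat) := ideal_gen (fun y => exists x : 'I_s -> A,
  (forall i : 'I_s, (i < t)%N -> a i (x i)) /\ y = \prod_(i < s | (i < t)%N) x i).

Lemma prod_lt_succ (F : 'I_s -> A) t (ht : (t < s)%N) :
  \prod_(i < s | (i < t.+1)%N) F i = F (Ordinal ht) * \prod_(i < s | (i < t)%N) F i.
Proof.
rewrite (bigD1 (Ordinal ht)) /=; last by rewrite ltnSn.
congr (_ * _); apply: eq_bigl => i.
rewrite -val_eqE /=; case: (ltngtP (val i) t) => h.
- by rewrite andbT; apply: ltnW.
- by rewrite andbT ltnS leqNgt h.
- by rewrite andbF.
Qed.

Lemma partial_prod0 : partial_prod 0 1.
Proof. by apply: gen_sub; exists (fun _ => 1); split=> //; rewrite big_pred0. Qed.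

Lemma partial_prod_full : subset_pr (partial_prod s) (prod_ideal a).
Proof.
apply: gen_min; first exact: gen_ideal.
move=> y [x [hx ->]]; apply: gen_sub; exists x; split; first by move=> i; apply: hx.
by apply: eq_bigl => i; rewrite ltn_ord.
Qed.

Lemma partial_prod_succ_sub t : (t < s)%N -> subset_pr (partial_prod t.+1) (partial_prod t).
Proof.
move=> ht; apply: gen_min; first exact: gen_ideal.
move=> y [x [hx ->]]; rewrite (prod_lt_succ _ ht).
apply: (idealM (I := partial_prod t)); first exact: gen_ideal.
by apply: gen_sub; exists x; split=> // i hi; apply: hx; lia.
Qed.

Lemma partial_prod_step t (ht : (t < s)%N) u w :
  a (Ordinal ht) u -> partial_prod t w -> partial_prod t.+1 (u * w).
Proof.
move=> hu hw; have hW : is_ideal (partial_prod t.+1) by apply: gen_ideal.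
have hP : is_ideal (fun w => partial_prod t.+1 (u * w)).
  split; [|split]; first by rewrite mulr0; apply: (ideal0 hW).
  - by move=> v v' hv hv'; rewrite mulrDr; apply: (idealD hW).
  - by move=> r v hv; rewrite mulrCA; apply: (idealM _ hW).
apply: (gen_min hP) hw => y [x [hx ->]].
apply: gen_sub; exists (fun i => if i == Ordinal ht then u else x i); split.
  move=> i hi; case: eqVneq => [->|hne] //.
  by apply: hx; move: hne; rewrite -val_eqE /= => hne; lia.
rewrite prod_lt_succ eqxx; congr (_ * _); apply: eq_bigr => i hi.
by have -> : (i == Ordinal ht) = false by apply/negP => /eqP e; rewrite e /= ltnn in hi.
Qed.

Lemma prod_ideal_sub i : subset_pr (prod_ideal a) (a i).
Proof. by apply: gen_min => // y [x [hx ->]]; rewrite (bigD1 i) //=; apply: idealMr. Qed.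

Lemma partial_prod_bounded_gens : noetherian A -> exists H, forall t, (t < s)%N ->
  exists ws : seq A, (size ws <= H)%N /\ (forall y, y \in ws -> partial_prod t y) /\
    subset_pr (partial_prod t) (span ws).
Proof.
move=> hN; suff : forall N, exists H, forall t, (t < N)%N -> exists ws : seq A,
  (size ws <= H)%N /\ (forall y, y \in ws -> partial_prod t y) /\
  subset_pr (partial_prod t) (span ws) by apply.
elim=> [|N [H hH]]; first by exists 0%N.
have [ws [hws1 hws2]] := noetherian_fg hN (gen_ideal (fun y => exists x : 'I_s -> A,
  (forall i : 'I_s, (i < N)%N -> a i (x i)) /\ y = \prod_(i < s | (i < N)%N) x i)).
exists (maxn H (size ws)) => t ht.
have [->|hne] := eqVneq t N; first by exists ws; split; [apply: leq_maxr|split].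
have [ws' [h1 h2]] := hH t ltac:(lia).
by exists ws'; split=> //; apply: leq_trans h1 (leq_maxl _ _).
Qed.

(* l(A / (J + a_0 ... a_(t-1))) <= t H M whenever l(A/(J + a_i)) <= M for all i:
   each step from J + a_0..a_(t-1) down to J + a_0..a_t adds at most H generators,
   each killed by J + a_t. *)
Lemma length_le_partial_prod (J : A -> Prop) H M : is_ideal J ->
  (forall t, (t < s)%N -> exists ws : seq A, (size ws <= H)%N /\
    (forall y, y \in ws -> partial_prod t y) /\ subset_pr (partial_prod t) (span ws)) ->
  (forall i, length_le (isum J (a i)) (@whole A) M) ->
  forall t, (t <= s)%N -> length_le (isum J (partial_prod t)) (@whole A) (t * (H * M)).
Proof.
move=> hJ hH hM; have hJW t : is_ideal (isum J (partial_prod t)).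
  by apply: isum_ideal => //; apply: gen_ideal.
elim=> [|t IH] hts.
  apply: length_le_trivial => x _; apply: ideal1_whole => //.
  by apply: isum_subr => //; apply: partial_prod0.
rewrite mulSn; apply: (length_le_add (M := isum J (partial_prod t))) => //.
- by apply: isum_mono => //; apply: partial_prod_succ_sub.
- have [ws [hws1 [hws2 hws3]]] := hH t hts.
  apply: (length_le_weaken (leq_mul hws1 (leqnn M))).
  apply: (length_le_narrow (I := isum J (partial_prod t.+1))
    (K := isum (isum J (partial_prod t.+1)) (span ws))) => //.
  + move=> x [j [w [hj [hw ->]]]]; exists (j + 0), w.
    split; last by split; [apply: hws3|rewrite addr0].
    by exists j, 0; do !split=> //; apply: ideal0; apply: gen_ideal.
  + apply: (length_le_span (U := isum J (a (Ordinal hts)))) => //.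
    move=> w hw r [j [u [hj [hu ->]]]]; rewrite mulrDl.
    exists (j * w), (u * w); split; first exact: idealMr.
    by split=> //; apply: partial_prod_step => //; apply: hws2.
- by apply: IH; lia.
Qed.

End ProductIdeal.

Section EntropyOfQuotients.
Variables (A : comNzRingType) (m : A -> Prop) (phi : {rmorphism A -> A}).
Hypothesis hnoe : noetherian A.
Hypothesis hloc : local_ring m.
Hypothesis hfl : finite_length_selfmap m phi.

(* The kernel of a map onto a nonzero ring is a proper ideal, hence lies in m. *)
Lemma quotient_kernel_sub_max (B : comNzRingType) (p : {rmorphism A -> B}) b :
  is_ideal b -> quotient_map p b -> subset_pr b m.
Proof.
move=> hb [_ hker] x hx; apply: NNPP => hnx.
have [_ [_ hunit]] := hloc; have [y hy] := hunit x hnx.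
have h1 : b 1%R by rewrite -hy; apply: idealMr.
by have := proj2 (hker 1%R) h1; rewrite rmorph1 => /eqP; rewrite oner_eq0.
Qed.

Lemma stable_iter (b : A -> Prop) : (forall x, b x -> b (phi x)) ->
  forall n x, b x -> b (iter n phi x).
Proof. by move=> hb; elim=> [|n IH] x hx //=; apply: hb; apply: IH. Qed.

Section InducedMap.
Variables (B : comNzRingType) (p : {rmorphism A -> B}) (q : {rmorphism B -> B}).
Variable b : A -> Prop.
Hypothesis hb : is_ideal b.
Hypothesis hquot : quotient_map p b.
Hypothesis hcomm : forall x, q (p x) = p (phi x).
Hypothesis hstable : forall x, b x -> b (phi x).

Let lam n := lambda_it (image_pr p m) q n.

(* lambda(q^n) >= 1: phi^n(m)A + b is a proper ideal. *)
Lemma lambda_induced_pos n : (1 <= lam n)%N.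
Proof.
have [_ hl] := lambda_quotient hquot n hloc hfl hnoe hcomm hb.
apply: hl; exists (fun k => if k == 0%N then isum (image_ideal m phi n) b else @whole A).
split; first by move=> [|k] /=; [apply: isum_ideal => //; apply: gen_ideal|].
split=> //; split=> // [[|k]] // _; split=> //; exists 1%R; split=> // h1.
have [hm [hm1 _]] := hloc; apply: hm1; apply: (isum_min hm) h1.
- exact: image_ideal_sub_max.
- exact: (quotient_kernel_sub_max hb hquot).
Qed.

Lemma lambda_induced_submult n k : (lam (n + k) <= lam n * lam k)%N.
Proof.
have [_ hlk] := lambda_quotient hquot k hloc hfl hnoe hcomm hb.
have [_ hln] := lambda_quotient hquot n hloc hfl hnoe hcomm hb.
have [hc _] := lambda_quotient hquot (n + k) hloc hfl hnoe hcomm hb.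
rewrite mulnC; apply: (length_le_image_ideal_mul hloc hb (stable_iter hstable n) hlk hln).
exact: hc.
Qed.

Lemma entropy_induced_limit :
  Un_cv (fun k => Rdiv (ln (INR (lam k))) (INR k)) (alg_entropy (image_pr p m) q).
Proof.
apply: log_submultiplicative_limit => [n|n k]; apply/leP.
- exact: lambda_induced_pos.
- exact: lambda_induced_submult.
Qed.

End InducedMap.

Lemma lambda_induced_mono (B B' : comNzRingType) (p : {rmorphism A -> B})
    (q : {rmorphism B -> B}) (p' : {rmorphism A -> B'}) (q' : {rmorphism B' -> B'})
    (b b' : A -> Prop) n :
  is_ideal b -> quotient_map p b -> (forall x, q (p x) = p (phi x)) ->
  is_ideal b' -> quotient_map p' b' -> (forall x, q' (p' x) = p' (phi x)) ->
  subset_pr b b' ->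
  (lambda_it (image_pr p' m) q' n <= lambda_it (image_pr p m) q n)%N.
Proof.
move=> hb hq hc hb' hq' hc' hbb'.
have [hchain _] := lambda_quotient hq' n hloc hfl hnoe hc' hb'.
have [_ hl] := lambda_quotient hq n hloc hfl hnoe hc hb.
by apply: hl; apply: strict_chain_widen hchain => //; apply: isum_mono.
Qed.

End EntropyOfQuotients.

Lemma prod_ideal_stable (A : comNzRingType) (phi : {rmorphism A -> A}) s
    (a : 'I_s -> A -> Prop) :
  (forall i x, a i x -> a i (phi x)) -> forall x, prod_ideal a x -> prod_ideal a (phi x).
Proof.
move=> hstable x hx; apply: (gen_image_sub (iter_ring_endo phi 1) (gen_ideal _)) hx.
move=> y [z [[xs [hxs ->]] ->]]; rewrite /= rmorph_prod; apply: gen_sub.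
by exists (fun i => phi (xs i)); split=> // i; apply: hstable.
Qed.

Section ProductQuotient.
Variables (A : comNzRingType) (m : A -> Prop) (phi : {rmorphism A -> A}).
Variables (s : nat) (a : 'I_s -> A -> Prop).
Variables (Q : comNzRingType) (pi : {rmorphism A -> Q}) (psi : {rmorphism Q -> Q}).
Variables (Qi : 'I_s -> comNzRingType) (pii : forall i, {rmorphism A -> Qi i}).
Variable psii : forall i, {rmorphism Qi i -> Qi i}.
Hypothesis hnoe : noetherian A.
Hypothesis hloc : local_ring m.
Hypothesis hfl : finite_length_selfmap m phi.
Hypothesis hs0 : (0 < s)%N.
Hypothesis hideal : forall i, is_ideal (a i).
Hypothesis hquot : quotient_map pi (prod_ideal a).
Hypothesis hcomm : forall x, psi (pi x) = pi (phi x).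
Hypothesis hquoti : forall i, quotient_map (pii i) (a i).
Hypothesis hcommi : forall i x, psii i (pii i x) = pii i (phi x).

Let lam n := lambda_it (image_pr pi m) psi n.
Let lami i n := lambda_it (image_pr (pii i) m) (psii i) n.
Let hprod : is_ideal (prod_ideal a) := gen_ideal _.

Lemma lambda_factor_le i n : (lami i n <= lam n)%N.
Proof.
apply: (lambda_induced_mono hnoe hloc hfl n hprod hquot hcomm (hideal i) (hquoti i) (hcommi i)).
exact: prod_ideal_sub.
Qed.

(* Conversely lambda on A/(a_1 ... a_s) is at most a constant times the largest
   lambda on the A/a_i, by the partial product filtration. *)
Lemma lambda_prod_le_max : exists C, forall n, exists i, (lam n <= C * lami i n)%N.
Proof.
have [H hH] := partial_prod_bounded_gens a hnoe.
exists (s * H) => n.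
have hcard : (0 < #|[pred i : 'I_s | true]|)%N by rewrite card_ord.
have [i0 _ hi0] := eq_bigmax_cond (fun i => lami i n) hcard.
exists i0.
have hM i : length_le (isum (image_ideal m phi n) (a i)) (@whole A) (lami i0 n).
  have [_ hl] := lambda_quotient (hquoti i) n hloc hfl hnoe (hcommi i) (hideal i).
  apply: (length_le_weaken _ hl); rewrite -hi0.
  exact: (@leq_bigmax_cond _ _ (fun j => lami j n) i).
have [hc _] := lambda_quotient hquot n hloc hfl hnoe hcomm hprod.
have hP := length_le_partial_prod (gen_ideal _) hH hM (leqnn s).
rewrite -mulnA; apply: (hP (lam n)); apply: strict_chain_widen hc => //.
by apply: isum_mono => //; apply: partial_prod_full.
Qed.

End ProductQuotient.

Lemma mem_In (T : eqType) (x : T) (l : seq T) : x \in l -> List.In x l.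
Proof.
by elim: l => [|y l IH] //; rewrite in_cons => /orP [/eqP ->|/IH]; [left|right].
Qed.

Unset Implicit Arguments.

Theorem mainTheorem10
  (A : comNzRingType) (m : A -> Prop) (phi : {rmorphism A -> A})
  (s : nat) (a : 'I_s -> A -> Prop)
  (Q : comNzRingType) (pi : {rmorphism A -> Q}) (psi : {rmorphism Q -> Q})
  (Qi : 'I_s -> comNzRingType) (pii : forall i, {rmorphism A -> Qi i})
  (psii : forall i, {rmorphism Qi i -> Qi i}) :
  noetherian A -> local_ring m -> finite_length_selfmap m phi ->
  (0 < s)%N ->
  (forall i, is_ideal (a i)) ->
  (forall i, subset_pr (ideal_gen (image_pr phi (a i))) (a i)) ->
  quotient_map pi (prod_ideal a) ->
  (forall x, psi (pi x) = pi (phi x)) ->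
  (forall i, quotient_map (pii i) (a i)) ->
  (forall i x, psii i (pii i x) = pii i (phi x)) ->
  (forall i, Rle (alg_entropy (image_pr (pii i) m) (psii i))
                 (alg_entropy (image_pr pi m) psi)) /\
  (exists i, alg_entropy (image_pr pi m) psi = alg_entropy (image_pr (pii i) m) (psii i)).
Proof.
move=> hnoe hloc hfl hs0 hideal hext hquot hcomm hquoti hcommi.
have hstable i x : a i x -> a i (phi x) by move=> hx; apply: hext; apply: gen_sub; exists x.
have hPstable := prod_ideal_stable hstable.
have hlamP := lambda_induced_pos hnoe hloc hfl (gen_ideal _) hquot hcomm.
have hlami i := lambda_induced_pos hnoe hloc hfl (hideal i) (hquoti i) (hcommi i).
have [C hC] := lambda_prod_le_max hnoe hloc hfl hs0 hideal hquot hcomm hquoti hcommi.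
apply: (limit_rate_of_max _ (enum 'I_s) _ _ _ (ln (INR C)) _ _
  (entropy_induced_limit hnoe hloc hfl (gen_ideal _) hquot hcomm hPstable)
  (fun i => entropy_induced_limit hnoe hloc hfl (hideal i) (hquoti i) (hcommi i) (hstable i))).
- by move=> i; apply: mem_In; rewrite mem_enum.
- move=> i k; apply: ln_INR_le; apply/leP; first exact: hlami.
  exact: (lambda_factor_le hnoe hloc hfl hideal hquot hcomm hquoti hcommi).
- move=> k; have [i hi] := hC k; exists i.
  by apply: ln_INR_le_mul; apply/leP; [exact: hlamP|exact: hlami|exact: hi].
Qed.
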